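(* Suppose that $X\subset U\subset\mathbb{R}^n$, where $U$ is open and $X$ is the closure in $U$ of its interior. Then $\tau^p(X)=X\times\mathcal{P}_p^*$ for all $p\in\mathbb{N}$.
   Context: $\mathcal{P}_p$: real polynomials on $\mathbb{R}^n$ of degree $\le p$; $\mathcal{P}_p^*$ its dual; $r=\dim\mathcal{P}_p$. For $\xi\in\mathcal{P}_p^*$, $b\in\mathbb{R}^n$, $|\alpha|\le p$: $\xi_\alpha(b):=\xi(\tfrac1{\alpha!}(x-b)^\alpha)$; $\delta_a(P)=P(a)$. A bundle over $X$ with fibres in $W$ is a subset of $X\times W$ whose fibres are linear subspaces. For a bundle $E\subset X\times\mathcal{P}_p^*$: $\Delta E=\{(a,b,\xi+\eta):a,b\in X,\xi\in E_a,\eta\in E_b,|a-b|^{p-|\alpha|}|\eta_\alpha(b)|\le1\ \forall|\alpha|\le p\}$, $E'=\{(a,\xi):(a,a,\xi)\in\overline{\Delta E}\}$ (closure in $X\times X\times\mathcal{P}_p^*$), $\rho(E)=\{(a,\xi):\xi\in\operatorname{Span}E'_a\}$. With $E_0=\{(a,\lambda\delta_a):a\in X,\lambda\in\mathbb{R}\}$, the bundles $\rho^i(E_0)$ coincide for $i\ge2r$, and $\tau^p(X):=\rho^{2r}(E_0)$. *)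

From HB Require Import structures.
From mathcomp Require Import all_boot all_order all_algebra.
From mathcomp Require Import reals.
From mathcomp Require Import mpoly.
Set Implicit Arguments. Unset Strict Implicit. Unset Printing Implicit Defensive.
Import Order.TTheory GRing.Theory Num.Theory.
Local Open Scope ring_scope.

Notation dual R n p := {ffun 'X_{1..n < p.+1} -> R^o}.

Section Whitney.
Variables (R : realType) (n p : nat).

Definition pt := 'I_n -> R.

Definition edist (a b : pt) : R := Num.sqrt (\sum_(i < n) (a i - b i) ^+ 2).

Definition is_open (U : pt -> Prop) : Prop :=
  forall x, U x -> exists2 e : R, 0 < e & forall y, edist x y < e -> U y.
Definition rn_interior (S : pt -> Prop) : pt -> Prop :=
  fun x => exists2 e : R, 0 < e & forall y, edist x y < e -> S y.
Definition rn_closure (S : pt -> Prop) : pt -> Prop :=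
  fun x => forall e : R, 0 < e -> exists2 y, S y & edist x y < e.

(* Multi-indices alpha with |alpha| <= p : they index the monomial basis of P_p. *)
Definition midx := 'X_{1..n < p.+1}.

Definition rdim : nat := #|{: midx}|.

(* P_p^*, written in the dual coordinates of the monomial basis:
   xi m = xi(x^m).  This is a finite-dimensional real vector space. *)
Local Notation dual := (dual R n p).

Definition dapp (xi : dual) (P : {mpoly R[n]}) : R :=
  \sum_(m : midx) P@_(bmnm m) * xi m.

Definition mfact (a : 'X_{1..n}) : nat := \prod_(i < n) (a i)`!.

Definition xi_at (xi : dual) (a : midx) (b : pt) : R :=
  dapp xi (((mfact (bmnm a))%:R)^-1 *:
             \prod_(i < n) ('X_i - (b i)%:MP) ^+ (bmnm a i)).

Definition delta (a : pt) : dual := [ffun m : midx => ('X_[bmnm m] : {mpoly R[n]}).@[a]].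

(* Norm on P_p^* (all norms equivalent in finite dimension). *)
Definition dnorm (xi : dual) : R := \sum_(m : midx) `|xi m|.

Definition bundle := pt -> dual -> Prop.

Definition DeltaE (X : pt -> Prop) (E : bundle) : pt -> pt -> dual -> Prop :=
  fun a b z => X a /\ X b /\
    exists xi eta, [/\ E a xi, E b eta,
      (forall al : midx, edist a b ^+ (p - mdeg (bmnm al)) * `|xi_at eta al b| <= 1)
      & z = xi + eta].

(* E' : (a, xi) with (a, a, xi) in the closure of Delta E in X x X x P_p^*. *)
Definition Eprime (X : pt -> Prop) (E : bundle) : bundle :=
  fun a xi => X a /\
    forall e : R, 0 < e -> exists a' b' z,
      [/\ DeltaE X E a' b' z, edist a a' < e, edist a b' < e & dnorm (z - xi) < e].

Definition span_of (S : dual -> Prop) : dual -> Prop :=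
  fun xi => exists k (c : 'I_k -> R) (v : 'I_k -> dual),
    (forall i, S (v i)) /\ xi = \sum_(i < k) c i *: v i.

Definition rho (X : pt -> Prop) (E : bundle) : bundle :=
  fun a xi => X a /\ span_of (Eprime X E a) xi.

Definition E0 (X : pt -> Prop) : bundle :=
  fun a xi => X a /\ exists l : R, xi = l *: delta a.

Definition tau (X : pt -> Prop) : bundle := iter (2 * rdim) (rho X) (E0 X).

End Whitney.

From HB Require Import structures.
From mathcomp Require Import all_boot all_order all_algebra.
From mathcomp Require Import reals.
From mathcomp Require Import mpoly.
From mathcomp Require Import zify.
Set Implicit Arguments. Unset Strict Implicit. Unset Printing Implicit Defensive.
Import Order.TTheory GRing.Theory Num.Theory.
Local Open Scope ring_scope.

(** Let E_s = rho^s(E_0); these are linear bundles over X, increasing in s.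
   At a point a with a ball around it inside X, expand
   delta_(a+th) = sum_j t^j c_j(h), so that c_0(h) = delta_a.  If c_j(h) is in
   (E_k)_a for j <= k < p, then xi = -t^-(k+1) sum_(j<=k) t^j c_j(h) in (E_k)_a
   and eta = t^-(k+1) delta_(a+th) in (E_k)_(a+th) are admissible in Delta E_k
   (the jet of eta at a+th is concentrated in degree 0, where it is weighted by
   |th|^p <= t^(k+1)), and xi + eta -> c_(k+1)(h) as t -> 0.  Hence (E_p)_a
   contains every point evaluation, and these span P_p^*: a polynomial of
   degree <= p vanishing at all Kronecker points (s, s^(p+1), s^((p+1)^2), ...)
   is zero.  A boundary point of X is a limit of interior points y, where
   (y, y, xi) is in Delta E_p for every xi, so (E_(p+1))_a is everything; and
   p + 1 <= r <= 2r when n > 0 (for n = 0 the single point evaluation delta_a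
   already spans the dual, so E_1 is full). *)

Lemma size_prod_leq (R : nzRingType) (I : Type) (r : seq I) (F : I -> {poly R}) :
  (size (\prod_(i <- r) F i)%R <= (\sum_(i <- r) (size (F i)).-1).+1)%N.
Proof.
elim: r => [|x r IH]; first by rewrite !big_nil size_poly1.
rewrite !big_cons; apply: leq_trans (size_polyMleq _ _) _; move: IH; lia.
Qed.

Section MsizeBounds.
Variables (R : idomainType) (n : nat).
Implicit Types (P Q : {mpoly R[n]}).

Lemma msizeM_leq P Q : (msize (P * Q) <= (msize P + msize Q).-1)%N.
Proof.
have [->|nP] := eqVneq P 0; first by rewrite mul0r msize0.
have [->|nQ] := eqVneq Q 0; first by rewrite mulr0 msize0.
by rewrite msizeM.
Qed.

Lemma msizeX_leq P k : (msize (P ^+ k) <= (k * (msize P).-1).+1)%N.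
Proof.
elim: k => [|k IH]; first by rewrite expr0 msize1.
rewrite exprS; apply: leq_trans (msizeM_leq _ _) _; move: IH; lia.
Qed.

Lemma msize_prod_leq (I : Type) (r : seq I) (F : I -> {mpoly R[n]}) :
  (msize (\prod_(i <- r) F i) <= (\sum_(i <- r) (msize (F i)).-1).+1)%N.
Proof.
elim: r => [|x r IH]; first by rewrite !big_nil msize1.
rewrite !big_cons; apply: leq_trans (msizeM_leq _ _) _; move: IH; lia.
Qed.

Lemma msize_XsubC i c : (msize ('X_i - c%:MP : {mpoly R[n]}) <= 2)%N.
Proof.
apply: leq_trans (msizeD_le _ _) _.
by rewrite msizeN msizeX mdeg1 msizeC geq_max; case: (c != 0).
Qed.

End MsizeBounds.

Section DualSpace.
Variables (R : realType) (n p : nat).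
Local Notation dual := (dual R n p).
Local Notation pt := (pt R n).
Local Notation midx := (midx n p).
Local Notation delta := (@delta R n p).

Lemma edist_refl (a : pt) : edist a a = 0.
Proof. by rewrite /edist big1 ?sqrtr0 // => i _; rewrite subrr expr0n. Qed.

Lemma dnorm_ge0 (x : dual) : 0 <= dnorm x.
Proof. exact: sumr_ge0. Qed.

Lemma dnorm0 : dnorm (0 : dual) = 0.
Proof. by rewrite /dnorm big1 // => m _; rewrite ffunE normr0. Qed.

Lemma dnormZ c (x : dual) : dnorm (c *: x) = `|c| * dnorm x.
Proof. by rewrite /dnorm mulr_sumr; apply: eq_bigr => m _; rewrite ffunE normrM. Qed.

Lemma dnorm_sum (I : Type) (r : seq I) (F : I -> dual) :
  dnorm (\sum_(i <- r) F i) <= \sum_(i <- r) dnorm (F i).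
Proof.
rewrite /dnorm exchange_big /=; apply: ler_sum => m _.
by rewrite sum_ffunE ler_norm_sum.
Qed.

Lemma xi_at0 (al : midx) b : xi_at (0 : dual) al b = 0.
Proof. by rewrite /xi_at /dapp big1 // => m _; rewrite ffunE mulr0. Qed.

Lemma delta_eq (y z : pt) : y =1 z -> delta y = delta z.
Proof. by move=> yz; apply/ffunP => m; rewrite !ffunE; apply: meval_eq. Qed.

Lemma dapp_delta (b : pt) (Q : {mpoly R[n]}) : (msize Q <= p.+1)%N ->
  dapp (delta b) Q = Q.@[b].
Proof.
move=> hQ; rewrite {2}(mpolywE hQ) /dapp raddf_sum /=.
by apply: eq_bigr => m _; rewrite ffunE mevalZ.
Qed.

Lemma msize_taylor_monomial (b : pt) (al : midx) :
  (msize (\prod_(i < n) ('X_i - (b i)%:MP) ^+ bmnm al i : {mpoly R[n]}) <= p.+1)%N.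
Proof.
apply: leq_trans (msize_prod_leq _ _) _; apply: leq_trans _ (bmdeg al).
rewrite ltnS mdegE; apply: leq_sum => i _.
have := msizeX_leq ('X_i - (b i)%:MP) (bmnm al i).
move: (msize_XsubC i (b i)); set m := msize _; set m' := msize _.
nia.
Qed.

Lemma xi_at_delta (b : pt) (al : midx) mu :
  xi_at (mu *: delta b) al b = mu * (bmnm al == 0%MM)%:R.
Proof.
rewrite /xi_at /dapp.
under eq_bigr => m _ do rewrite ffunE mulrCA.
rewrite -mulr_sumr -/(dapp _ _) dapp_delta; last first.
  by apply: leq_trans (msizeZ_le _ _) _; exact: msize_taylor_monomial.
congr (_ * _); rewrite mevalZ (big_morph _ (mevalM b) (meval1 b)).
have [-> | /eqP alN0] := eqVneq (bmnm al) 0%MM.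
  by rewrite /mfact !big1 ?invr1 ?mul1r // => i _; rewrite mnm0E ?expr0 ?meval1.
have [i al_i] : exists i, bmnm al i != 0%N.
  apply/existsP; apply: contra_notT alN0 => /existsPn al0.
  by apply/mnmP => i; rewrite mnm0E; apply/eqP/negbNE/al0.
rewrite [X in _ * X](bigD1 i) //= rmorphXn /= mevalB mevalXU mevalC subrr.
by rewrite expr0n (negbTE al_i) mul0r mulr0.
Qed.

End DualSpace.

Section Bundles.
Variables (R : realType) (n p : nat) (X : pt R n -> Prop).
Local Notation dual := (dual R n p).
Local Notation bundle := (bundle R n p).

Record linear_bundle (E : bundle) : Prop := LinearBundle {
  bundle_base : forall a xi, E a xi -> X a;
  bundle0 : forall a, X a -> E a 0;
  bundleD : forall a x y, E a x -> E a y -> E a (x + y);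
  bundleZ : forall a c x, E a x -> E a (c *: x) }.

Lemma bundle_sum E a (I : Type) (r : seq I) (F : I -> dual) :
  linear_bundle E -> X a -> (forall i, E a (F i)) -> E a (\sum_(i <- r) F i).
Proof.
by move=> [_ E0 ED _] Xa EF; apply: big_ind => //; [exact: E0 | exact: ED].
Qed.

Lemma bundle_span E a (S : dual -> Prop) xi :
  linear_bundle E -> X a -> (forall w, S w -> E a w) -> span_of S xi -> E a xi.
Proof.
move=> EL Xa SE [k [c [v [Sv ->]]]].
by apply: bundle_sum => // i; apply: (bundleZ EL); exact: SE.
Qed.

Lemma span_of_sub (S : dual -> Prop) x : S x -> span_of S x.
Proof.
by move=> Sx; exists 1%N, (fun=> 1), (fun=> x); rewrite big_ord1 scale1r.
Qed.

Lemma span_of_linear (S : bundle) :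
  linear_bundle (fun a xi => X a /\ span_of (S a) xi).
Proof.
split => [a xi [] // | a Xa | a x y [Xa [k [c [v [Sv ->]]]]] [_ [l [d [w [Sw ->]]]]]
         | a c x [Xa [k [d [v [Sv ->]]]]]]; split => //.
- by exists 0%N, (fun=> 0), (fun=> 0); split; [case | rewrite big_ord0].
- exists (k + l)%N, (fun i => match split i with inl j => c j | inr j => d j end),
    (fun i => match split i with inl j => v j | inr j => w j end).
  split; first by move=> i; case: split.
  rewrite big_split_ord /=; congr (_ + _); apply: eq_bigr => i _.
    by have /= -> := unsplitK (inl _ i : 'I_k + 'I_l).
  by have /= -> := unsplitK (inr _ i : 'I_k + 'I_l).
- exists k, (fun i => c * d i), v; split => //.
  by rewrite scaler_sumr; apply: eq_bigr => i _; rewrite scalerA.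
Qed.

Lemma E0_linear : linear_bundle (E0 X).
Proof.
split => [a xi [] // | a Xa | a x y [Xa [l ->]] [_ [l' ->]] | a c x [Xa [l ->]]].
- by split => //; exists 0; rewrite scale0r.
- by split => //; exists (l + l'); rewrite scalerDl.
- by split => //; exists (c * l); rewrite scalerA.
Qed.

Lemma rho_linear E : linear_bundle (rho X E).
Proof. exact: span_of_linear. Qed.

Lemma rho_sub E a xi : linear_bundle E -> E a xi -> rho X E a xi.
Proof.
move=> EL Exi; have Xa := bundle_base EL Exi; split => //; apply: span_of_sub.
split => // e e0; exists a, a, (xi + 0); rewrite edist_refl addr0 subrr dnorm0.
split => //; split => //; split => //; exists xi, 0; split => //.
- exact: (bundle0 EL).
- by move=> al; rewrite xi_at0 normr0 mulr0.
- by rewrite addr0.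
Qed.

Definition rho_iter s : bundle := iter s (rho X) (E0 X).

Lemma rho_iter_linear s : linear_bundle (rho_iter s).
Proof. by case: s => [|s]; [exact: E0_linear | exact: rho_linear]. Qed.

Lemma rho_iter_mono s t a xi : (s <= t)%N -> rho_iter s a xi -> rho_iter t a xi.
Proof.
move=> /subnK <-; elim: (t - s)%N => [|k IH] //= Exi.
by apply: rho_sub (rho_iter_linear _) _; exact: IH.
Qed.

End Bundles.

Arguments rho_iter_linear {R n p X} s.

Section Lines.
Variables (R : realType) (n p : nat).
Local Notation dual := (dual R n p).
Local Notation pt := (pt R n).
Local Notation midx := (midx n p).
Local Notation delta := (@delta R n p).

Definition line (a h : pt) (t : R) : pt := fun i => a i + t * h i.

Definition line_monomial (a h : pt) (m : midx) : {poly R} :=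
  \prod_(i < n) ((a i)%:P + h i *: 'X) ^+ bmnm m i.

Definition line_coef (a h : pt) (j : nat) : dual :=
  [ffun m => (line_monomial a h m)`_j].

Definition enorm (h : pt) : R := Num.sqrt (\sum_i h i ^+ 2).

Lemma size_line_monomial a h m : (size (line_monomial a h m) <= p.+1)%N.
Proof.
apply: leq_trans (size_prod_leq _ _) _; apply: leq_trans _ (bmdeg m).
rewrite ltnS mdegE; apply: leq_sum => i _.
have size_lin : (size ((a i)%:P + h i *: 'X)%R <= 2)%N.
  apply: leq_trans (size_polyD _ _) _; rewrite geq_max size_polyC.
  by rewrite (leq_trans (leq_b1 _)) // (leq_trans (size_scale_leq _ _)) ?size_polyX.
move: (size_poly_exp_leq ((a i)%:P + h i *: 'X) (bmnm m i)) size_lin.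
set s := size _; set s' := size _; nia.
Qed.

Lemma delta_line a h t :
  delta (line a h t) = \sum_(j < p.+1) t ^+ j *: line_coef a h j.
Proof.
apply/ffunP => m; rewrite sum_ffunE !ffunE mevalX.
transitivity (line_monomial a h m).[t].
  by rewrite horner_prod; apply: eq_bigr => i _; rewrite !hornerE mulrC.
rewrite (horner_coef_wide t (size_line_monomial a h m)).
by apply: eq_bigr => j _; rewrite !ffunE mulrC.
Qed.

Lemma line_coef0 a h : line_coef a h 0 = delta a.
Proof.
apply/ffunP => m; rewrite !ffunE mevalX -horner_coef0 horner_prod.
by apply: eq_bigr => i _; rewrite !hornerE.
Qed.

Lemma line_coef_eq0 a h j : (p < j)%N -> line_coef a h j = 0.
Proof.
move=> pj; apply/ffunP => m; rewrite !ffunE nth_default //.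
exact: leq_trans (size_line_monomial a h m) pj.
Qed.

Lemma edist_line a h t : 0 <= t -> edist a (line a h t) = t * enorm h.
Proof.
move=> t0; rewrite /edist /enorm.
have -> : \sum_i (a i - line a h t i) ^+ 2 = t ^+ 2 * \sum_i h i ^+ 2.
  rewrite mulr_sumr; apply: eq_bigr => i _.
  by rewrite /line opprD addrA subrr add0r sqrrN exprMn.
by rewrite sqrtrM ?sqr_ge0 // sqrtr_sqr ger0_norm.
Qed.

Lemma line_remainder_le a h k t : 0 < t -> t <= 1 -> (k < p)%N ->
  dnorm (t ^- k.+1 *: (delta (line a h t) - \sum_(j < k.+1) t ^+ j *: line_coef a h j)
         - line_coef a h k.+1)
  <= t * \sum_(j < p.+1) dnorm (line_coef a h j).
Proof.
move=> t0 t1 kp; set F := fun j => t ^+ j *: line_coef a h j.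
have split_sum : \sum_(j < p.+1) F j =
    \sum_(j < k.+1) F j + (F k.+1 + \sum_(k.+2 <= j < p.+1) F j).
  rewrite -!(big_mkord xpredT) (big_cat_nat (leq0n _) (leqW kp)) //=.
  by rewrite (big_ltn (kp : k.+1 < p.+1)%N).
have scale_lead : t ^- k.+1 *: F k.+1 = line_coef a h k.+1.
  by rewrite scalerA mulVf ?expf_neq0 ?gt_eqF // scale1r.
rewrite delta_line split_sum [\sum_(j < k.+1) F j + _]addrC addrK scalerDr scale_lead.
rewrite addrAC subrr add0r scaler_sumr; apply: le_trans (dnorm_sum _ _) _.
apply: (@le_trans _ _ (\sum_(k.+2 <= j < p.+1) t * dnorm (line_coef a h j))).
  apply: ler_sum_nat => j /andP [kj _]; rewrite /F scalerA dnormZ.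
  apply: ler_wpM2r; first exact: dnorm_ge0.
  rewrite -(subnKC (ltnW kj)) exprD mulKf ?expf_neq0 ?gt_eqF //.
  rewrite ger0_norm; last exact: exprn_ge0 (ltW t0).
  have : (0 < j - k.+1)%N by rewrite subn_gt0.
  case: (j - k.+1)%N => // d _; rewrite exprS.
  by apply: ler_piMr; [exact: ltW | exact: exprn_ile1 (ltW t0) t1].
rewrite -mulr_sumr; apply: ler_wpM2l; first exact: ltW.
rewrite -(big_mkord xpredT (fun j => dnorm (line_coef a h j))).
rewrite (big_cat_nat (leq0n k.+2) (kp : k.+2 <= p.+1)%N) //= lerDr.
by apply: sumr_ge0 => j _; exact: dnorm_ge0.
Qed.

Lemma jet_delta_le1 (a b : pt) t k (al : midx) : 0 < t -> t <= 1 -> (k < p)%N ->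
  edist a b <= t ->
  edist a b ^+ (p - mdeg (bmnm al)) * `|xi_at (t ^- k.+1 *: delta b) al b| <= 1.
Proof.
move=> t0 t1 kp dab; rewrite xi_at_delta.
have [-> | _] := eqVneq (bmnm al) 0%MM; last by rewrite mulr0 normr0 mulr0.
rewrite mdeg0 subn0 mulr1 ger0_norm; last by rewrite invr_ge0 exprn_ge0 // ltW.
apply: (@le_trans _ _ (t ^+ p * t ^- k.+1)).
  apply: ler_wpM2r; first by rewrite invr_ge0 exprn_ge0 // ltW.
  by apply: lerXn2r; rewrite // nnegrE ?sqrtr_ge0 // ltW.
rewrite -(subnKC kp) exprD mulrAC mulfV ?expf_neq0 ?gt_eqF // mul1r.
by rewrite exprn_ile1 // ltW.
Qed.

End Lines.

Lemma exists_small_pos (R : realFieldType) (rad e C : R) :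
  0 < rad -> 0 < e -> 0 <= C ->
  exists t, [/\ 0 < t, t <= 1, t < rad & t * (C + 1) < e].
Proof.
move=> rad_gt0 e_gt0 C_ge0; have C1 : 0 < C + 1 by rewrite ltr_wpDl.
set m := Num.min 1 (Num.min rad (e / (C + 1))).
have m_gt0 : 0 < m by rewrite !lt_min ltr01 rad_gt0 divr_gt0.
have tm : m / 2 < m by rewrite ltr_pdivrMr // ltr_pMr // ltr1n.
exists (m / 2); split; first by rewrite divr_gt0.
- by apply/ltW/(lt_le_trans tm); rewrite ge_min lexx.
- by apply: lt_le_trans tm _; rewrite !ge_min lexx orbT.
- by rewrite -ltr_pdivlMr //; apply: lt_le_trans tm _; rewrite !ge_min lexx !orbT.
Qed.

Section InteriorPoints.
Variables (R : realType) (n p : nat) (X : pt R n -> Prop).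
Local Notation rho_iter := (@rho_iter R n p X).
Local Notation delta := (@delta R n p).
Variables (a : pt R n) (rad : R).
Hypotheses (rad_gt0 : 0 < rad) (ball_sub : forall y, edist a y < rad -> X y).

Lemma ball_center_in : X a.
Proof. by apply: ball_sub; rewrite edist_refl. Qed.

Lemma line_coef_Eprime k h : (k < p)%N -> enorm h <= 1 ->
  (forall j, (j <= k)%N -> rho_iter k a (line_coef p a h j)) ->
  Eprime X (rho_iter k) a (line_coef p a h k.+1).
Proof.
move=> kp h1 coef_in; split; first exact: ball_center_in.
move=> e e0; set C := \sum_(j < p.+1) dnorm (line_coef p a h j).
have C0 : 0 <= C by apply: sumr_ge0 => j _; exact: dnorm_ge0.
have [t [t0 t1 trad tCe]] := exists_small_pos rad_gt0 e0 C0.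
have te : t < e.
  by apply: le_lt_trans tCe; apply: ler_peMr; [exact: ltW | rewrite lerDr].
set b := line a h t.
have dab : edist a b <= t.
  by rewrite edist_line; [apply: ler_piMr => //; exact: ltW | exact: ltW].
exists a, b, (- (t ^- k.+1 *: \sum_(j < k.+1) t ^+ j *: line_coef p a h j)
              + t ^- k.+1 *: delta b).
rewrite edist_refl; split=> //; first split.
- exact: ball_center_in.
- split; first by apply: ball_sub; exact: le_lt_trans trad.
  exists (- (t ^- k.+1 *: \sum_(j < k.+1) t ^+ j *: line_coef p a h j)),
    (t ^- k.+1 *: delta b); split => //.
  + rewrite -scaleN1r; do 2 apply: (bundleZ (rho_iter_linear k)).
    apply: (bundle_sum _ (rho_iter_linear k) ball_center_in) => j.
    by apply: (bundleZ (rho_iter_linear k)); apply: coef_in; rewrite -ltnS.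
  + apply: (bundleZ (rho_iter_linear k)); apply: rho_iter_mono (leq0n k) _.
    by split; [apply: ball_sub; exact: le_lt_trans trad | exists 1; rewrite scale1r].
  + by move=> al; exact: jet_delta_le1.
- exact: le_lt_trans te.
- rewrite [- _ + _]addrC -scalerBr.
  apply: le_lt_trans (line_remainder_le a h t0 t1 kp) _.
  by apply: le_lt_trans tCe; apply: ler_wpM2l; [exact: ltW | rewrite lerDl].
Qed.

Lemma line_coef_in_rho_iter k h : enorm h <= 1 ->
  forall j, (j <= k)%N -> rho_iter k a (line_coef p a h j).
Proof.
move=> h1; elim: k => [|k IH] j.
  rewrite leqn0 => /eqP ->; rewrite line_coef0.
  by split; [exact: ball_center_in | exists 1; rewrite scale1r].
rewrite leq_eqVlt ltnS => /orP [/eqP -> | jk]; last first.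
  exact: rho_iter_mono (leqnSn k) (IH j jk).
have [kp | pk] := ltnP k p; last first.
  by rewrite line_coef_eq0 //; exact: (bundle0 (rho_iter_linear k.+1) ball_center_in).
split; first exact: ball_center_in.
by apply: span_of_sub; exact: line_coef_Eprime.
Qed.

Lemma delta_in_rho_iter_center y : rho_iter p a (delta y).
Proof.
set L := edist a y + 1.
have L0 : 0 < L by rewrite ltr_wpDl // sqrtr_ge0.
pose h i := (y i - a i) / L.
have lineL : line a h L =1 y.
  by move=> i; rewrite /line /h mulrC divfK ?gt_eqF // addrC subrK.
have h1 : enorm h <= 1.
  rewrite -(ler_pM2l L0) mulr1 -(edist_line a h (ltW L0)).
  have -> : edist a (line a h L) = edist a y.
    by rewrite /edist; congr Num.sqrt; apply: eq_bigr => i _; rewrite lineL.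
  by rewrite lerDl.
rewrite -(delta_eq p lineL) delta_line.
apply: (bundle_sum _ (rho_iter_linear p) ball_center_in) => j.
apply: (bundleZ (rho_iter_linear p)); apply: (line_coef_in_rho_iter h1).
exact: (ltn_ord j).
Qed.

End InteriorPoints.

Lemma digits_lt N k (f : 'I_k -> nat) :
  (forall i, f i < N)%N -> (\sum_(i < k) f i * N ^ i < N ^ k)%N.
Proof.
elim: k f => [|k IH] f f_lt; first by rewrite big_ord0 expn0.
rewrite big_ord_recr /= expnS.
move: (IH _ (fun i => f_lt (widen_ord (leqnSn k) i))) (f_lt ord_max).
set S := (\sum_(i < k) _)%N; set d := f _; nia.
Qed.

Lemma digits_inj N k (f g : 'I_k -> nat) :
  (forall i, f i < N)%N -> (forall i, g i < N)%N ->
  (\sum_(i < k) f i * N ^ i = \sum_(i < k) g i * N ^ i)%N -> f =1 g.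
Proof.
elim: k f g => [|k IH] f g f_lt g_lt; first by move=> _ [].
have N0 : (0 < N)%N by apply: leq_ltn_trans (f_lt ord0).
have shift u : (\sum_(i < k.+1) u i * N ^ i =
    (\sum_(i < k) u (lift ord0 i) * N ^ i) * N + u ord0)%N.
  rewrite big_ord_recl muln1 addnC big_distrl; congr (_ + _).
  by apply: eq_bigr => i _; rewrite expnS mulnCA mulnC.
rewrite !shift => e.
have e0 : f ord0 = g ord0.
  by move/(congr1 (modn^~ N)): e; rewrite /= !modnMDl !modn_small.
move/(congr1 (divn^~ N)): e; rewrite /= !divnMDl // !divn_small // !addn0 => e.
move=> i; case: (unliftP ord0 i) => [j -> | ->] //.
exact: IH (fun j => f_lt _) (fun j => g_lt _) e j.
Qed.

Section PointEvaluations.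
Variables (R : realType) (n p : nat).
Local Notation dual := (dual R n p).
Local Notation pt := (pt R n).
Local Notation midx := (midx n p).
Local Notation delta := (@delta R n p).

Definition kron_exp (m : midx) : nat := \sum_(i < n) bmnm m i * p.+1 ^ i.

Definition kron_pt (s : R) : pt := fun i => s ^+ (p.+1 ^ i).

Lemma bmnm_lt (m : midx) i : (bmnm m i < p.+1)%N.
Proof. by apply: leq_ltn_trans (bmdeg m); rewrite mdegE (bigD1 i) //= leq_addr. Qed.

Lemma kron_exp_lt m : (kron_exp m < p.+1 ^ n)%N.
Proof. exact: digits_lt (bmnm_lt m). Qed.

Lemma kron_exp_inj : injective kron_exp.
Proof.
move=> m m' e; apply: val_inj; apply/mnmP => i.
exact: digits_inj (bmnm_lt m) (bmnm_lt m') e i.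
Qed.

Lemma delta_kron_pt s m : delta (kron_pt s) m = s ^+ kron_exp m.
Proof.
rewrite ffunE mevalX /kron_exp -prodrXr.
by apply: eq_bigr => i _; rewrite -exprM mulnC.
Qed.

Lemma kron_coef_eq0 (v : midx -> R) :
  (forall s : 'I_(p.+1 ^ n), \sum_m v m * s%:R ^+ kron_exp m = 0) -> forall m, v m = 0.
Proof.
move=> v_root m0; pose Q : {poly R} := \sum_m v m *: 'X^(kron_exp m).
have Q0 : Q = 0.
  apply: (@roots_geq_poly_eq0 _ _ [seq s%:R | s <- iota 0 (p.+1 ^ n)]).
  - apply/allP => x /mapP [s]; rewrite mem_iota => /andP [_ s_lt] ->.
    rewrite /root horner_sum; apply/eqP; rewrite -[RHS](v_root (Ordinal s_lt)).
    by apply: eq_bigr => m _; rewrite hornerZ hornerXn.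
  - by rewrite map_inj_uniq ?iota_uniq //; exact: mulrIn (oner_neq0 _).
  rewrite size_map size_iota; apply: leq_trans (size_sum _ _ _) _.
  apply/bigmax_leqP => m _; apply: leq_trans (size_scale_leq _ _) _.
  by rewrite size_polyXn; exact: kron_exp_lt.
move/(congr1 (fun q : {poly R} => q`_(kron_exp m0))): Q0.
rewrite coef0 coef_sum (bigD1 m0) //= coefZ coefXn eqxx mulr1 big1 ?addr0 // => m mm0.
by rewrite coefZ coefXn (inj_eq kron_exp_inj) eq_sym (negbTE mm0) mulr0.
Qed.

Lemma delta_span (xi : dual) : span_of (fun w => exists y, w = delta y) xi.
Proof.
pose D : 'M[R]_(p.+1 ^ n, #|{: midx}|) :=
  \matrix_(s, l) delta (kron_pt s%:R) (enum_val l).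
have coker0 : cokermx D = 0.
  apply/matrixP => l j; rewrite [RHS]mxE -(enum_valK l); move: (enum_val l).
  apply: (kron_coef_eq0 (v := fun m => cokermx D (enum_rank m) j)) => s.
  move/matrixP/(_ s j): (mulmx_coker D); rewrite !mxE => D_coker.
  rewrite -[RHS]D_coker (reindex enum_rank) /=; last exact/onW_bij/enum_rank_bij.
  by apply: eq_bigr => m _; rewrite [D _ _]mxE enum_rankK delta_kron_pt mulrC.
have D_full : row_full D.
  by rewrite /row_full eqn_leq rank_leq_col -subn_eq0 -mxrank_coker coker0 mxrank0.
have /submxP [c xiE] := submx_full (\row_l xi (enum_val l)) D_full.
exists (p.+1 ^ n)%N, (fun s => c 0 s), (fun s => delta (kron_pt s%:R)).
split; first by move=> s; exists (kron_pt s%:R).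
apply/ffunP => m; move/matrixP/(_ 0 (enum_rank m)): xiE.
rewrite !mxE enum_rankK sum_ffunE => ->.
by apply: eq_bigr => s _; rewrite mxE enum_rankK !ffunE.
Qed.

End PointEvaluations.

Section Fibres.
Variables (R : realType) (n p : nat) (X : pt R n -> Prop).
Local Notation rho_iter := (@rho_iter R n p X).
Local Notation delta := (@delta R n p).

Lemma linear_bundle_full E a : linear_bundle X E -> X a ->
  (forall y, E a (delta y)) -> forall xi, E a xi.
Proof.
move=> EL Xa Edelta xi; apply: (bundle_span EL Xa _ (delta_span xi)).
by move=> _ [y ->]; exact: Edelta.
Qed.

Lemma rdim_gt0 : (0 < rdim n p)%N.
Proof. by apply/card_gt0P; exists bm0. Qed.

Lemma deg_lt_rdim : (0 < n)%N -> (p < rdim n p)%N.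
Proof.
move=> n_gt0; pose i0 : 'I_n := Ordinal n_gt0.
have deg_lt (j : 'I_p.+1) : (mdeg (U_(i0) *+ j)%MM < p.+1)%N.
  by rewrite mdegMn mdeg1 mul1n ltn_ord.
pose f j : midx n p := BMultinom (deg_lt j).
have f_inj : injective f.
  move=> j j' /(congr1 (fun m : midx n p => bmnm m i0)) /=.
  by rewrite !mulmnE mnm1E eqxx !mul1n => /ord_inj.
by have := leq_card f f_inj; rewrite card_ord.
Qed.

Lemma rho_iter_full_interior a :
  rn_interior X a -> forall xi, rho_iter (rdim n p).-1 a xi.
Proof.
case=> rad rad_gt0 ball_sub; have Xa := ball_center_in rad_gt0 ball_sub.
apply: (linear_bundle_full (rho_iter_linear _) Xa) => y.
have [n0 | n_gt0] := posnP n.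
  have -> : delta y = delta a.
    by apply: delta_eq => i; have := leq_trans (ltn_ord i) (eq_leq n0).
  apply: (rho_iter_mono (leq0n _)).
  by split => //; exists 1; rewrite scale1r.
apply: rho_iter_mono (delta_in_rho_iter_center p rad_gt0 ball_sub y).
by rewrite -ltnS prednK ?rdim_gt0 ?deg_lt_rdim.
Qed.

Lemma rho_iter_succ_full s a :
  (forall x, X x -> rn_closure (rn_interior X) x) ->
  (forall b, rn_interior X b -> forall xi, rho_iter s b xi) ->
  X a -> forall xi, rho_iter s.+1 a xi.
Proof.
move=> X_dense interior_full Xa xi; split => //; apply: span_of_sub; split => // e e0.
have [y y_int ay] := X_dense a Xa e e0.
have Xy : X y by case: y_int => r r0 ball; exact: ball_center_in r0 ball.
exists y, y, (xi + 0); rewrite addr0 subrr dnorm0; split => //.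
split => //; split => //; exists xi, 0; split => //.
- exact: interior_full.
- exact: (bundle0 (rho_iter_linear s)).
- by move=> al; rewrite xi_at0 normr0 mulr0.
- by rewrite addr0.
Qed.

End Fibres.

Theorem lemma4p20 (R : realType) (n : nat) (X U : pt R n -> Prop) :
  is_open U ->
  (forall x, X x -> U x) ->
  (forall x, X x <-> (U x /\ rn_closure (rn_interior X) x)) ->
  forall p : nat, forall (a : pt R n) (xi : dual R n p),
    @tau R n p X a xi <-> X a.
Proof.
move=> _ _ X_closure p a xi; split; first exact: (bundle_base (rho_iter_linear _)).
have X_dense x : X x -> rn_closure (rn_interior X) x by case/X_closure.
move=> Xa; have interior_full := @rho_iter_full_interior R n p X.
apply: rho_iter_mono (rho_iter_succ_full X_dense interior_full Xa xi).
by rewrite prednK ?rdim_gt0 // leq_pmull.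
Qed.
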